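(* Let $b,c,t$ be positive integers, $n=tb$, and let $\mathbf{H}^{*}_{qc}$ be a $cb\times tb$ binary matrix which is a $c\times t$ array of $b\times b$ circulant matrices over $\mathbb{F}_2$, of rank $r$ over $\mathbb{F}_2$. Let $\mathcal{C}\subseteq\mathbb{F}_2^n$ be the code with parity-check matrix $\mathbf{H}^{*}_{qc}$ and $\Lambda=\mathcal{C}+2\mathbb{Z}^n=\{\mathbf{x}\in\mathbb{Z}^n:\mathbf{x}\bmod 2\in\mathcal{C}\}$. Suppose $l$ with $c\le l\le t$ is the least number of columns of circulants of $\mathbf{H}^{*}_{qc}$ forming a submatrix of rank $r$, and that the last $l$ columns of circulants of $\mathbf{H}^{*}_{qc}$ form such a $cb\times lb$ submatrix $\mathbf{D}^{*}$. Suppose $d_1,\dots,d_l\in\{0,\dots,b\}$, with $\bar d_j=b-d_j$, are such that the columns of $\mathbf{D}^{*}$ consisting, for each $j=1,\dots,l$, of the last $\bar d_j$ columns of the $j$-th column block (of width $b$) of $\mathbf{D}^{*}$ are linearly independent over $\mathbb{F}_2$ and number exactly $r$ (so $\sum_j\bar d_j=r$ and $\sum_j d_j=lb-r$). For each $i$ with $d_i\ge1$, let $\mathbf{w}_i=(\mathbf{w}_i^{(1)},\dots,\mathbf{w}_i^{(l)})\in\mathbb{F}_2^{lb}$, $\mathbf{w}_i^{(j)}\in\mathbb{F}_2^b$, be the vector with $\mathbf{D}^{*}\mathbf{w}_i^t=\mathbf{0}$ over $\mathbb{F}_2$ such that the first $d_j$ entries of $\mathbf{w}_i^{(j)}$ are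 $(1,0,\dots,0)$ if $j=i$ and all $0$ if $j\ne i$. Let $\sigma$ denote the cyclic right shift by one position on $\mathbb{F}_2^b$. Let $\mathbf{Q}$ be the $(lb-r)\times tb$ binary matrix whose rows are, for each $i=1,\dots,l$ and $s=0,\dots,d_i-1$, the vectors $(\mathbf{0}_{(t-l)b},\sigma^s(\mathbf{w}_i^{(1)}),\dots,\sigma^s(\mathbf{w}_i^{(l)}))$. Let $\mathbf{G}$ be a $(t-l)b\times tb$ binary matrix of the form $[\mathbf{I}_{(t-l)b}\ |\ \mathbf{G}']$ with $\mathbf{G}'$ a $(t-l)\times l$ array of $b\times b$ circulants, and assume that $\mathbf{G}^{*}_{qc}=\begin{bmatrix}\mathbf{G}\\ \mathbf{Q}\end{bmatrix}$ is a generator matrix of $\mathcal{C}$ (its $tb-r$ rows form a basis of $\mathcal{C}$). Let $\mathbf{R}$ be the $r\times tb$ integer matrix $[\mathbf{0}_{r\times(t-l)b}\ |\ \mathbf{B}]$ where $\mathbf{B}$ is block diagonal with $l$ diagonal blocks, the $j$-th being the $\bar d_j\times b$ matrix $[\mathbf{0}_{\bar d_j\times d_j}\ \ 2\mathbf{I}_{\bar d_j}]$. Then the $n\times n$ integer matrix $$\mathbf{G}_{\Lambda}=\begin{bmatrix}\mathbf{G}^{*}_{qc}\\ \mathbf{R}\end{bmatrix}$$ (entries of $\mathbf{G}^{*}_{qc}$ regarded as integers $0,1$) is a generator matrix of $\Lambda$, i.e., its rows form a $\mathbb{Z}$-basis of $\Lambda$.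
   Context: Codewords of a binary code are embedded in $\mathbb{Z}^n$ with entries $0,1$. $\Lambda=\mathcal{C}+2\mathbb{Z}^n$ is the Construction A lattice of $\mathcal{C}$ (a QC-LDPC lattice when $\mathcal{C}$ is a quasi-cyclic LDPC code). A generator matrix of a full-rank lattice is a square matrix whose rows form a $\mathbb{Z}$-basis of the lattice. *)

From HB Require Import structures.
From mathcomp Require Import all_boot all_order all_algebra.
Set Implicit Arguments. Unset Strict Implicit. Unset Printing Implicit Defensive.
Import Order.TTheory GRing.Theory Num.Theory.
Local Open Scope ring_scope.

Definition ent (R : nmodType) (m n : nat) (A : 'M[R]_(m, n)) (i j : nat) : R :=
  match insub i, insub j with
  | Some i', Some j' => A i' j'
  | _, _ => 0
  end.

(* index k, in block k %/ b, shifted cyclically by one inside its block *)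
Definition bshift (b k : nat) : nat := (k %/ b * b + (k %% b).+1 %% b)%N.

(* A is an array of b x b circulant blocks (quasi-cyclic) *)
Definition block_circulant (R : nmodType) (b m n : nat) (A : 'M[R]_(m, n)) : Prop :=
  forall i j : nat, (i < m)%N -> (j < n)%N ->
    ent A i j = ent A (bshift b i) (bshift b j).

Definition code (m n : nat) (H : 'M['F_2]_(m, n)) (x : 'rV['F_2]_n) : Prop :=
  H *m x^T = 0.

Definition mod2 (z : int) : 'F_2 := z%:~R.

Definition constrA (m n : nat) (H : 'M['F_2]_(m, n)) (x : 'rV[int]_n) : Prop :=
  code H (map_mx mod2 x).

Definition lift01 (x : 'F_2) : int := (val x)%:Z.

Definition rows_basis (R : pzRingType) (m N : nat) (A : 'M[R]_(m, N))
  (P : 'rV[R]_N -> Prop) : Prop :=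
  [/\ forall i, P (row i A),
      forall x, P x -> exists z : 'rV[R]_m, x = z *m A
    & forall z : 'rV[R]_m, z *m A = 0 -> z = 0].

Definition lattice_generator (m N : nat) (A : 'M[int]_(m, N))
  (L : 'rV[int]_N -> Prop) : Prop := m = N /\ rows_basis A L.

(* H with all columns outside the column blocks in S zeroed out; its rank is
   the rank of the submatrix of the column blocks in S *)
Definition colblocks (m t b : nat) (H : 'M['F_2]_(m, t * b)) (S : {set 'I_t}) :=
  H *m diag_mx (\row_(j < t * b) ([exists k in S, nat_of_ord k == (j %/ b)%N])%:R).

Definition lastblocks (m t b l : nat) (H : 'M['F_2]_(m, t * b)) : 'M['F_2]_(m, l * b) :=
  \matrix_(i < m, j < l * b) ent H i ((t - l) * b + j).

(* D with all columns except those selected by d zeroed out: in block j the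
   last b - d j columns are selected *)
Definition selcols (m l b : nat) (d : nat -> nat) (D : 'M['F_2]_(m, l * b)) :=
  D *m diag_mx (\row_(j < l * b) (d (j %/ b) <= j %% b)%N%:R).

(* the rows (0, sigma^s w^(1), ..., sigma^s w^(l)), s < d i, sigma = cyclic right shift *)
Definition Qblock (t l b di : nat) (wi : 'rV['F_2]_(l * b)) : 'M['F_2]_(di, t * b) :=
  \matrix_(s < di, col < t * b)
    if (col < (t - l) * b)%N then 0
    else let j' := (col - (t - l) * b)%N in
         ent wi 0 ((j' %/ b) * b + ((j' %% b + b - s %% b) %% b)).

Definition Qmat (t l b : nat) (d : nat -> nat) (w : nat -> 'rV['F_2]_(l * b)) :=
  \mxcol_(i < l) Qblock t (d i) (w i).

(* rows [0_{dbar_j x d_j} 2 I_{dbar_j}] placed at column block (t-l)+j *)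
Definition Rblock (t l b dj j : nat) : 'M[int]_(b - dj, t * b) :=
  \matrix_(k < b - dj, col < t * b)
    if nat_of_ord col == ((t - l) * b + j * b + dj + k)%N then 2 else 0.

Definition Rmat (t l b : nat) (d : nat -> nat) :=
  \mxcol_(j < l) Rblock t l b (d j) j.

(* Order the rows of [G*_qc] so that they are unit-triangular with respect to
   pivot columns: column i for the i-th row of [G = [I | G']], and column s of
   the i-th of the last l blocks for the row sigma^s(w_i) of Q; the
   normalisation of the w_i makes Q triangular once its rows are sorted by
   decreasing shift s.  The non-pivot columns are exactly those carrying the
   entries 2 of R.  Given x in the lattice, an integer combination of the rows
   of [G*_qc] makes it vanish on the pivots; its reduction mod 2 is then a
   codeword vanishing on the pivots, hence 0, so what remains is an even
   vector supported on the non-pivot columns, an integer combination of the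
   rows of R.  Linear independence follows from the same triangularity. *)

From HB Require Import structures.
From mathcomp Require Import all_boot all_order all_algebra.
From mathcomp Require Import zify.
Set Implicit Arguments. Unset Strict Implicit. Unset Printing Implicit Defensive.
Import Order.TTheory GRing.Theory Num.Theory.
Local Open Scope ring_scope.

Definition pivot_triangular (R : nmodType) m n (A : 'M[R]_(m, n))
  (piv : 'I_m -> 'I_n) (rk : 'I_m -> nat) :=
  forall p q, p != q -> A p (piv q) != 0 -> (rk p < rk q)%N.

Lemma pivot_triangular_free (R : idomainType) m n (A : 'M[R]_(m, n)) piv rk :
  (forall p, A p (piv p) != 0) -> pivot_triangular A piv rk ->
  forall z : 'rV_m, (forall q, (z *m A) 0 (piv q) = 0) -> z = 0.
Proof.
move=> Adiag Atri z zA0.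
suff zN : forall N q, (rk q < N)%N -> z 0 q = 0.
  by apply/rowP => q; rewrite mxE (zN (rk q).+1).
elim=> [//|N IH] q rkq.
have := zA0 q; rewrite mxE (bigD1 q) //= big1 ?addr0.
  by move/eqP; rewrite mulf_eq0 (negbTE (Adiag q)) orbF => /eqP.
move=> p pq; have [->|Apq] := eqVneq (A p (piv q)) 0; first by rewrite mulr0.
by rewrite IH ?mul0r // (leq_trans (Atri _ _ pq Apq)).
Qed.

Lemma pivot_triangular_solve (R : pzRingType) m n (A : 'M[R]_(m, n)) piv rk :
  (forall p, A p (piv p) = 1) -> pivot_triangular A piv rk ->
  forall x : 'rV_n, exists z : 'rV_m, forall q, (z *m A) 0 (piv q) = x 0 (piv q).
Proof.
move=> Adiag Atri x.
suff zN : forall N, exists z : 'rV_m,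
    forall q, (rk q < N)%N -> (z *m A) 0 (piv q) = x 0 (piv q).
  have [z zx] := zN (\max_q rk q).+1; exists z => q.
  by apply: zx; rewrite ltnS leq_bigmax.
elim=> [|N [z zx]]; first by exists 0.
pose e := x - z *m A.
pose dz := \row_p (if rk p == N then e 0 (piv p) else 0).
have dzA q : (rk q <= N)%N -> (dz *m A) 0 (piv q) = if rk q == N then e 0 (piv q) else 0.
  move=> rkq; rewrite mxE (bigD1 q) //= big1 ?addr0; first by rewrite mxE Adiag mulr1.
  move=> p pq; rewrite mxE; case: eqP => [rkp|]; last by rewrite mul0r.
  have [->|Apq] := eqVneq (A p (piv q)) 0; first by rewrite mulr0.
  by have := Atri _ _ pq Apq; rewrite rkp ltnNge rkq.
exists (z + dz) => q rkq; rewrite mulmxDl mxE dzA //.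
case: eqP => [_|rkN]; first by rewrite !mxE addrC subrK.
by rewrite addr0 zx // ltn_neqAle -ltnS rkq andbT; apply/eqP.
Qed.

Lemma mod2_lift01 (a : 'F_2) : mod2 (lift01 a) = a.
Proof. by case: a => [[|[|]]] //= ?; apply/val_inj. Qed.

Lemma lift01_eq0 (a : 'F_2) : (lift01 a == 0) = (a == 0).
Proof. by case: a => [[|[|]]]. Qed.

Lemma natrb_F2_neq0 (c : bool) : (c%:R : 'F_2) != 0 -> c.
Proof. by case: c. Qed.

Lemma mod2_eq0_dvdz (z : int) : mod2 z = 0 -> (2 %| z)%Z.
Proof.
have ch := pchar_Fp (isT : prime 2).
rewrite dvdzE /mod2; case: z => n /=; first by move/eqP; rewrite -(dvdn_pcharf ch).
by rewrite NegzE mulrNz => /eqP; rewrite oppr_eq0 -(dvdn_pcharf ch).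
Qed.

Lemma map_mod2B n (u v : 'rV[int]_n) :
  map_mx mod2 (u - v) = map_mx mod2 u - map_mx mod2 v.
Proof. by apply/rowP => j; rewrite !mxE /mod2 mulrzBr. Qed.

Lemma map_mod2_mulmx m k n (z : 'M[int]_(m, k)) (M : 'M['F_2]_(k, n)) :
  map_mx mod2 (z *m map_mx lift01 M) = map_mx mod2 z *m M.
Proof.
rewrite [LHS](map_mxM (intr : {rmorphism int -> 'F_2})); congr (_ *m _).
by apply/matrixP => i j; rewrite !mxE; apply: mod2_lift01.
Qed.

Lemma code_mulmx m n k (H : 'M['F_2]_(m, n)) (M : 'M['F_2]_(k, n)) (z : 'rV_k) :
  (forall i, code H (row i M)) -> code H (z *m M).
Proof.
move=> Mcode; rewrite /code trmx_mul mulmxA.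
suff -> : H *m M^T = 0 by rewrite mul0mx.
apply: trmx_inj; rewrite trmx_mul trmxK trmx0; apply/row_matrixP => i.
by rewrite row_mul row0 -[row i M]trmxK -trmx_mul Mcode trmx0.
Qed.

Lemma ent_ord (R : nmodType) m n (A : 'M[R]_(m, n)) (i : 'I_m) (j : 'I_n) :
  ent A i j = A i j.
Proof. by rewrite /ent !valK. Qed.

Section ConstructionABasis.

Variables (m k k' n : nat) (H : 'M['F_2]_(m, n)).
Variables (M : 'M['F_2]_(k, n)) (piv : 'I_k -> 'I_n) (rk : 'I_k -> nat).
Variables (R : 'M[int]_(k', n)) (pivR : 'I_k' -> 'I_n).
Hypothesis M_basis : rows_basis M (code H).
Hypothesis M_pivot : forall p, M p (piv p) = 1.
Hypothesis M_triangular : pivot_triangular M piv rk.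
Hypothesis RE : forall q c, R q c = if c == pivR q then 2 else 0.
Hypothesis pivR_inj : injective pivR.
Hypothesis pivots_disjoint : forall p q, piv p != pivR q.
Hypothesis pivots_cover : forall c, (exists p, c = piv p) \/ (exists q, c = pivR q).
Hypothesis dimE : (k + k' = n)%N.

Let A := map_mx lift01 M.

Lemma R_pivot0 p q : R q (piv p) = 0.
Proof. by rewrite RE (negbTE (pivots_disjoint p q)). Qed.

Lemma mulmxR_pivot0 (y : 'rV_k') p : (y *m R) 0 (piv p) = 0.
Proof. by rewrite mxE big1 // => q _; rewrite R_pivot0 mulr0. Qed.

Lemma lift_pivot_triangular : pivot_triangular A piv rk.
Proof. by move=> p q pq; rewrite mxE lift01_eq0; apply: M_triangular. Qed.

Lemma lift_pivot p : A p (piv p) = 1.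
Proof. by rewrite mxE M_pivot. Qed.

Lemma constrA_rows i : constrA H (row i (col_mx A R)).
Proof.
have [Mrows _ _] := M_basis.
case: (split_ordP i) => [p ->|q ->]; rewrite /constrA.
  rewrite rowKu; have -> : map_mx mod2 (row p A) = row p M.
    by apply/rowP => j; rewrite !mxE; apply: mod2_lift01.
  exact: Mrows.
rewrite rowKd; have -> : map_mx mod2 (row q R) = 0.
  by apply/rowP => j; rewrite !mxE RE; case: eqP => _; apply/val_inj.
by rewrite /code trmx0 mulmx0.
Qed.

Lemma constrA_pivot0_even (x : 'rV[int]_n) :
  constrA H x -> (forall p, x 0 (piv p) = 0) -> forall c, x 0 c \in dvdz 2.
Proof.
have [_ Mspan _] := M_basis.
move=> xA xpiv0 c; have [z xz] := Mspan _ xA.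
have z0 : z = 0.
  apply: (pivot_triangular_free _ M_triangular) => [p|q].
    by rewrite M_pivot oner_neq0.
  by rewrite -xz mxE xpiv0.
apply: mod2_eq0_dvdz.
by have := congr1 (fun v : 'rV_n => v 0 c) xz; rewrite z0 mul0mx !mxE.
Qed.

Lemma constrA_span (x : 'rV[int]_n) : constrA H x -> exists z, x = z *m col_mx A R.
Proof.
have [Mrows _ _] := M_basis.
move=> xA; have [z1 z1x] := pivot_triangular_solve lift_pivot lift_pivot_triangular x.
pose x' := x - z1 *m A.
have x'piv0 p : x' 0 (piv p) = 0.
  by move: (z1x p); rewrite /x' !mxE => ->; rewrite subrr.
have x'A : constrA H x'.
  rewrite /constrA map_mod2B map_mod2_mulmx /code raddfB /= mulmxBr.
  by rewrite (code_mulmx _ Mrows) subr0.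
have x'even := constrA_pivot0_even x'A x'piv0.
pose y := \row_q divz (x' 0 (pivR q)) 2.
suff x'E : x' = y *m R by exists (row_mx z1 y); rewrite mul_row_col -x'E addrC subrK.
apply/rowP => c; case: (pivots_cover c) => [[p ->]|[q0 ->]].
  by rewrite x'piv0 mulmxR_pivot0.
rewrite [RHS]mxE (bigD1 q0) //= big1 ?addr0; first by rewrite RE eqxx [y _ _]mxE divzK.
by move=> q qq0; rewrite RE (inj_eq pivR_inj) eq_sym (negbTE qq0) mulr0.
Qed.

Lemma constrA_free (z : 'rV_(k + k')) : z *m col_mx A R = 0 -> z = 0.
Proof.
rewrite -[z]hsubmxK mul_row_col; set z1 := lsubmx z; set z2 := rsubmx z => z0.
have z10 : z1 = 0.
  apply: (pivot_triangular_free _ lift_pivot_triangular) => [p|q].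
    by rewrite lift_pivot oner_neq0.
  have := congr1 (fun v : 'rV_n => v 0 (piv q)) z0.
  by rewrite /= mxE mulmxR_pivot0 addr0 => ->; rewrite mxE.
have z20 : z2 = 0.
  move: z0; rewrite z10 mul0mx add0r => z0.
  apply: (@pivot_triangular_free _ _ _ R pivR (fun=> 0%N)) => [q|p q pq|q].
  - by rewrite RE eqxx.
  - by rewrite RE (inj_eq pivR_inj) (eq_sym q) (negbTE pq) eqxx.
  - by rewrite z0 mxE.
by rewrite z10 z20 row_mx0.
Qed.

Theorem constrA_generator : lattice_generator (col_mx A R) (constrA H).
Proof.
split=> //; split; [exact: constrA_rows | exact: constrA_span | exact: constrA_free].
Qed.

End ConstructionABasis.

Lemma tagnat_sig_inj n (p_ : 'I_n -> nat) (q q' : 'I_(\sum_i p_ i)) :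
  tagnat.sig1 q = tagnat.sig1 q' -> tagnat.sig2 q = tagnat.sig2 q' :> nat -> q = q'.
Proof.
move=> e1 e2; rewrite -(tagnat.sig2K q) -(tagnat.sig2K q'); apply/val_inj/eqP.
by rewrite tagnat.eq_Rank e2 e1 !eqxx.
Qed.

Lemma mulnD_small_inj b i j s k : (s < b)%N -> (k < b)%N ->
  (i * b + s = j * b + k)%N -> i = j /\ s = k.
Proof.
move=> sb kb E; have b_gt0 : (0 < b)%N by apply: leq_ltn_trans sb.
have := congr1 (divn^~ b) E; have := congr1 (modn^~ b) E.
by rewrite !divnMDl // !modnMDl !divn_small // !modn_small // !addn0 => -> ->.
Qed.

Section QuasiCyclicPivots.

Variables (b t l : nat) (d : nat -> nat) (w : nat -> 'rV['F_2]_(l * b)).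
Variable G : 'M['F_2]_((t - l) * b, t * b).
Hypothesis b_gt0 : (0 < b)%N.
Hypothesis l_le_t : (l <= t)%N.
Hypothesis d_le_b : forall j, (j < l)%N -> (d j <= b)%N.
Hypothesis w_normal : forall i, (i < l)%N -> (1 <= d i)%N ->
  forall j k, (j < l)%N -> (k < d j)%N ->
  ent (w i) 0 (j * b + k) = ((j == i) && (k == 0%N))%:R.
Hypothesis G_id : forall i j, (i < (t - l) * b)%N -> (j < (t - l) * b)%N ->
  ent G i j = (i == j)%:R.

Local Notation K := ((t - l) * b)%N.
Local Notation GQ := (col_mx G (Qmat t d w)).
Local Notation sig1 := tagnat.sig1.
Local Notation sig2 := tagnat.sig2.

Definition lastcol j k := (K + j * b + k)%N.

Lemma lastcol_lt j k : (j < l)%N -> (k < b)%N -> (lastcol j k < t * b)%N.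
Proof.
move=> jl kb; have tbE : (t * b = K + l * b)%N by rewrite -mulnDl subnK.
have := leq_mul jl (leqnn b); rewrite /lastcol tbE mulSn; lia.
Qed.

Lemma lastcol_inj j j' k k' : (k < b)%N -> (k' < b)%N ->
  lastcol j k = lastcol j' k' -> j = j' /\ k = k'.
Proof. by move=> kb k'b; rewrite /lastcol -!addnA => /addnI; apply: mulnD_small_inj. Qed.

Lemma lastcolP (c : 'I_(t * b)) : (K <= c)%N ->
  exists (j : 'I_l) (k : 'I_b), nat_of_ord c = lastcol j k.
Proof.
move=> Kc; set x := (c - K)%N.
have xl : (x %/ b < l)%N.
  by rewrite ltn_divLR // /x ltn_subLR // -mulnDl subnK // ltn_ord.
exists (Ordinal xl), (Ordinal (ltn_pmod x b_gt0)).
by rewrite /lastcol /= -addnA -divn_eq /x subnKC.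
Qed.

Lemma G_entry (i : 'I_K) (j : 'I_(t * b)) : (j < K)%N -> G i j = (i == j :> nat)%:R.
Proof. by move=> jK; rewrite -ent_ord G_id. Qed.

Lemma sig2_lt_b (q : 'I_(\sum_(i < l) d i)) : (sig2 q < b)%N.
Proof. exact: leq_trans (ltn_ord _) (d_le_b (ltn_ord _)). Qed.

Lemma Qmat_left q (c : 'I_(t * b)) : (c < K)%N -> Qmat t d w q c = 0.
Proof. by move=> cK; rewrite !mxE cK. Qed.

Lemma Qmat_lastcol q (c : 'I_(t * b)) j k : (k < b)%N -> nat_of_ord c = lastcol j k ->
  Qmat t d w q c = ent (w (sig1 q)) 0 (j * b + (k + b - sig2 q) %% b).
Proof.
move=> kb cE; rewrite !mxE cE /lastcol -addnA ltnNge leq_addr /= addKn.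
by rewrite divnMDl // (divn_small kb) addn0 modnMDl (modn_small kb) (modn_small (sig2_lt_b q)).
Qed.

Lemma Qrow_w_normal (q : 'I_(\sum_(i < l) d i)) j k : (j < l)%N -> (k < d j)%N ->
  ent (w (sig1 q)) 0 (j * b + k) = ((j == sig1 q) && (k == 0%N))%:R.
Proof. by apply: w_normal => //; apply: leq_ltn_trans (leq0n _) (ltn_ord (sig2 q)). Qed.

Definition gq_pivot_nat (p : 'I_(K + \sum_(i < l) d i)) : nat :=
  match split p with inl i => i | inr q => lastcol (sig1 q) (sig2 q) end.

Lemma gq_pivot_lt p : (gq_pivot_nat p < t * b)%N.
Proof.
rewrite /gq_pivot_nat; case: split_ordP => [i _|q _].
  exact: leq_trans (ltn_ord i) (leq_mul (leq_subr l t) (leqnn b)).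
exact: lastcol_lt (ltn_ord _) (sig2_lt_b q).
Qed.

Definition gq_pivot p := Ordinal (gq_pivot_lt p).

(* A row sigma^s(w_i) of Q is nonzero at the pivot of another row of Q only
   if that row has a smaller shift, so Q rows are ranked by decreasing shift. *)
Definition gq_rank (p : 'I_(K + \sum_(i < l) d i)) : nat :=
  match split p with inl _ => 0 | inr q => ((b - sig2 q) * l + sig1 q).+1 end.

Lemma gq_pivot_lshift i : gq_pivot (lshift _ i) = i :> nat.
Proof. by rewrite /= /gq_pivot_nat (unsplitK (inl i)). Qed.

Lemma gq_pivot_rshift q : gq_pivot (rshift K q) = lastcol (sig1 q) (sig2 q) :> nat.
Proof. by rewrite /= /gq_pivot_nat (unsplitK (inr q)). Qed.

Lemma gq_rank_lshift i : gq_rank (lshift _ i) = 0%N.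
Proof. by rewrite /gq_rank (unsplitK (inl i)). Qed.

Lemma gq_rank_rshift q : gq_rank (rshift K q) = ((b - sig2 q) * l + sig1 q).+1.
Proof. by rewrite /gq_rank (unsplitK (inr q)). Qed.

Lemma gq_pivot_one p : GQ p (gq_pivot p) = 1.
Proof.
case: (split_ordP p) => [i ->|q ->].
  by rewrite col_mxEu G_entry gq_pivot_lshift ?eqxx.
rewrite col_mxEd (Qmat_lastcol _ (sig2_lt_b q) (gq_pivot_rshift q)).
have d_gt0 : (0 < d (sig1 q))%N := leq_ltn_trans (leq0n _) (ltn_ord (sig2 q)).
rewrite addKn modnn.
by move: (Qrow_w_normal q (ltn_ord (sig1 q)) d_gt0); rewrite addn0 => ->; rewrite !eqxx.
Qed.

Lemma Qmat_pivot_triangular q0 q1 : q0 != q1 ->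
  Qmat t d w q0 (gq_pivot (rshift K q1)) != 0 ->
  ((b - sig2 q0) * l + sig1 q0 < (b - sig2 q1) * l + sig1 q1)%N.
Proof.
move=> q01; rewrite (Qmat_lastcol _ (sig2_lt_b q1) (gq_pivot_rshift q1)).
have [s01|s10] := leqP (sig2 q0) (sig2 q1); last first.
  move=> _; have i0_lt := ltn_ord (sig1 q0); have s0_lt := sig2_lt_b q0.
  have : ((b - sig2 q0).+1 * l <= (b - sig2 q1) * l)%N by apply: leq_mul => //; lia.
  rewrite mulSn; lia.
have s1_lt := ltn_ord (sig2 q1).
rewrite -addnBAC // modnDr modn_small; last by apply: leq_ltn_trans (leq_subr _ _) (sig2_lt_b q1).
rewrite Qrow_w_normal //; last by apply: leq_ltn_trans (leq_subr _ _) s1_lt.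
case/natrb_F2_neq0/andP => /eqP e1; rewrite subn_eq0 => s10.
case/eqP: q01; apply: tagnat_sig_inj; first exact: val_inj (esym e1).
by apply/eqP; rewrite eqn_leq s01 s10.
Qed.

Lemma gq_pivot_triangular : pivot_triangular GQ gq_pivot gq_rank.
Proof.
move=> p q; case: (split_ordP p) => [i ->|q0 ->]; case: (split_ordP q) => [i' ->|q1 ->].
- rewrite eq_lshift col_mxEu G_entry gq_pivot_lshift ?ltn_ord // => ii'.
  by rewrite val_eqE (negbTE ii') eqxx.
- by rewrite gq_rank_lshift gq_rank_rshift.
- by rewrite col_mxEd Qmat_left ?eqxx // gq_pivot_lshift.
- by rewrite eq_rshift col_mxEd !gq_rank_rshift ltnS; apply: Qmat_pivot_triangular.
Qed.

Lemma r_offset_lt (q : 'I_(\sum_(j < l) (b - d j))) : (d (sig1 q) + sig2 q < b)%N.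
Proof. by rewrite -ltn_subRL. Qed.

Definition r_pivot_nat (q : 'I_(\sum_(j < l) (b - d j))) : nat :=
  lastcol (sig1 q) (d (sig1 q) + sig2 q).

Lemma r_pivot_lt q : (r_pivot_nat q < t * b)%N.
Proof. exact: lastcol_lt (ltn_ord _) (r_offset_lt q). Qed.

Definition r_pivot q := Ordinal (r_pivot_lt q).

Lemma Rmat_pivotE q c : Rmat t l b d q c = if c == r_pivot q then 2 else 0.
Proof. by rewrite !mxE -val_eqE /= /r_pivot_nat /lastcol addnA. Qed.

Lemma r_pivot_inj : injective r_pivot.
Proof.
move=> q q' /(congr1 val)/(lastcol_inj (r_offset_lt q) (r_offset_lt q')) [e1 e2].
apply: tagnat_sig_inj (val_inj e1) _; apply/(@addnI (d (sig1 q))).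
by rewrite [LHS]e2 e1.
Qed.

Lemma gq_r_pivot_disjoint p q : gq_pivot p != r_pivot q.
Proof.
apply/eqP => /(congr1 val); rewrite /= /gq_pivot_nat /r_pivot_nat.
case: split_ordP => [i _|q0 _].
  by move=> iE; have := ltn_ord i; rewrite iE /lastcol -addnA ltnNge leq_addr.
case/(lastcol_inj (sig2_lt_b q0) (r_offset_lt q)) => e1 e2.
by have := ltn_ord (sig2 q0); rewrite e2 e1 ltnNge leq_addr.
Qed.

Lemma gq_r_pivots_cover c :
  (exists p, c = gq_pivot p) \/ (exists q, c = r_pivot q).
Proof.
have [cK|Kc] := ltnP c K.
  by left; exists (lshift _ (Ordinal cK)); apply: ord_inj; rewrite gq_pivot_lshift.
have [j [k cE]] := lastcolP Kc.
have [kd|dk] := ltnP k (d j).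
  left; exists (rshift K (@tagnat.Rank l (fun i : 'I_l => d i) j (Ordinal kd))).
  by apply: ord_inj; rewrite gq_pivot_rshift tagnat.Rank2K /= tagnat.Rank1K.
have kd : (k - d j < b - d j)%N by rewrite ltn_sub2r // (leq_ltn_trans dk).
right; exists (@tagnat.Rank l (fun i : 'I_l => b - d i)%N j (Ordinal kd)).
by apply: val_inj; rewrite /= /r_pivot_nat tagnat.Rank2K /= tagnat.Rank1K subnKC.
Qed.

Lemma gq_r_dim : (K + \sum_(i < l) d i + \sum_(j < l) (b - d j) = t * b)%N.
Proof.
rewrite -addnA -big_split /= (eq_bigr (fun=> b)) => [|j _]; last by rewrite subnKC ?d_le_b.
by rewrite sum_nat_const card_ord -mulnDl subnK.
Qed.

End QuasiCyclicPivots.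

Theorem theorem1 (b c t r l : nat) (H : 'M['F_2]_(c * b, t * b))
  (d : nat -> nat) (w : nat -> 'rV['F_2]_(l * b))
  (G : 'M['F_2]_((t - l) * b, t * b)) :
  (0 < b)%N -> (0 < c)%N -> (0 < t)%N ->
  block_circulant b H ->
  \rank H = r ->
  (c <= l)%N -> (l <= t)%N ->
  (forall S : {set 'I_t}, \rank (colblocks H S) = r -> (l <= #|S|)%N) ->
  \rank (lastblocks l H) = r ->
  (forall j, (j < l)%N -> (d j <= b)%N) ->
  (\sum_(j < l) (b - d j))%N = r ->
  \rank (selcols d (lastblocks l H)) = r ->
  (forall i, (i < l)%N -> (1 <= d i)%N ->
     lastblocks l H *m (w i)^T = 0 /\
     (forall j k, (j < l)%N -> (k < d j)%N ->
        ent (w i) 0 (j * b + k) = ((j == i) && (k == 0%N))%:R)) ->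
  (forall i j, (i < (t - l) * b)%N -> (j < (t - l) * b)%N ->
     ent G i j = (i == j)%:R) ->
  block_circulant b G ->
  rows_basis (col_mx G (Qmat t d w)) (code H) ->
  lattice_generator
    (col_mx (map_mx lift01 (col_mx G (Qmat t d w))) (Rmat t l b d))
    (constrA H).
Proof.
move=> b_gt0 _ _ _ _ _ l_le_t _ _ d_le_b _ _ w_kernel G_id _ GQ_basis.
have w_normal i il di := (w_kernel i il di).2.
apply: (constrA_generator GQ_basis).
- exact: (gq_pivot_one b_gt0 l_le_t d_le_b w_normal G_id).
- exact: gq_pivot_triangular.
- exact: Rmat_pivotE.
- exact: r_pivot_inj.
- exact: gq_r_pivot_disjoint.
- exact: gq_r_pivots_cover.
- exact: gq_r_dim.
Qed.
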